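(* Let $k\geq2$ and let $L=(l_1,\dots,l_k)$ be generic positive integers with sum $n$. Let $X=(u,v)$ be an oriented 1-simplex of $Tonn^{n,k}(L)$ with $L$-type $I\subseteq[k]$. Then $X$ is homotopic relative to its end-points to an edge-path $Y_1Y_2\cdots Y_t$ consisting of $\oplus$-atomic oriented 1-simplices, where $t=|I|$ and the types of $Y_1,\dots,Y_t$ are pairwise distinct and together form exactly the set $I$.
   Context: The generalized tonnetz $Tonn^{n,k}(L)$ is the simplicial complex on vertex set $\mathbb{Z}_n$ whose maximal simplices are $\Delta(x;\sigma)=\{x,\,x+l_{\sigma(1)},\dots,x+l_{\sigma(1)}+\dots+l_{\sigma(k-1)}\}$ for $x\in\mathbb{Z}_n$, $\sigma\in S_k$. $L$ is generic if for all $I,J\subseteq[k]$, $\sum_{i\in I}l_i=\sum_{j\in J}l_j$ implies $I=J$. For an oriented 1-simplex $X=(u,v)$, its $L$-type is the unique nonempty $I\subseteq[k]$ with $v-u\equiv\sum_{j\in I}l_j\pmod n$, where $v-u$ is taken in $\{1,\dots,n-1\}$ (it exists since $\{u,v\}$ lies in some $\Delta(x;\sigma)$, and is unique by genericity). $X$ is $\oplus$-atomic of type $i$ if $v=u+l_i$ in $\mathbb{Z}_n$. Edge-paths are sequences of oriented 1-simplices with matching end-points; two edge-paths with the same end-points are homotopic (rel end-points) if one is obtained from the other by finitely many elementary moves: replacing an edge $(a,c)$ by $(a,b)(b,c)$ where $\{a,b,c\}$ is a simplex, or the reverse (including insertion/deletion of backtracks $(a,b)(b,a)$). *)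

From HB Require Import structures.
From mathcomp Require Import all_boot all_order all_fingroup.
From Stdlib Require Import Relation_Operators.
Set Implicit Arguments. Unset Strict Implicit. Unset Printing Implicit Defensive.

(* L = (l_1,...,l_k) is a function 'I_k -> nat; vertices of Z_n are the
   naturals 0..n-1, with arithmetic taken %% n. *)

Definition tn (k : nat) (L : 'I_k -> nat) : nat := \sum_(i < k) L i.

Definition generic (k : nat) (L : 'I_k -> nat) : Prop :=
  forall I J : {set 'I_k}, \sum_(i in I) L i = \sum_(j in J) L j -> I = J.

(* v is a vertex of Delta(x; s) =
   {x, x + l_s(1), ..., x + l_s(1) + ... + l_s(k-1)} *)
Definition in_maxsimp (k : nat) (L : 'I_k -> nat) (x : nat) (s : {perm 'I_k})
  (v : nat) : bool :=
  [exists j : 'I_k, v == (x + \sum_(i < k | i < j) L (s i)) %% tn L].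

Definition is_simplex (k : nat) (L : 'I_k -> nat) (S : seq nat) : bool :=
  [exists x : 'I_(tn L), [exists s : {perm 'I_k}, all (in_maxsimp L x s) S]].

Definition is_edge (k : nat) (L : 'I_k -> nat) (u v : nat) : bool :=
  [&& u < tn L, v < tn L, u != v & is_simplex L [:: u; v]].

Definition Ltype (k : nat) (L : 'I_k -> nat) (u v : nat) (I : {set 'I_k}) : Prop :=
  I != set0 /\ (v + tn L - u) %% tn L = (\sum_(j in I) L j) %% tn L.

Definition atomic (k : nat) (L : 'I_k -> nat) (u v : nat) (i : 'I_k) : Prop :=
  v = (u + L i) %% tn L.

(* vertices after u of the edge-path of (+)-atomic steps of types Y *)
Fixpoint awalk (k : nat) (L : 'I_k -> nat) (u : nat) (Y : seq 'I_k) : seq nat :=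
  match Y with
  | [::] => [::]
  | i :: Y' => let w := (u + L i) %% tn L in w :: awalk L w Y'
  end.

(* Edge-paths are represented by their vertex sequences w_0 w_1 ... w_t,
   the edges being (w_j, w_{j+1}).  Elementary moves: *)
Inductive elem_move (k : nat) (L : 'I_k -> nat) : seq nat -> seq nat -> Prop :=
| em_tri (p q : seq nat) (a b c : nat) :
    is_edge L a c -> is_edge L a b -> is_edge L b c ->
    is_simplex L [:: a; b; c] ->
    elem_move L (p ++ [:: a, c & q]) (p ++ [:: a, b, c & q])
| em_back (p q : seq nat) (a b : nat) :
    is_edge L a b -> is_edge L b a ->
    elem_move L (p ++ a :: q) (p ++ [:: a, b, a & q]).

Definition homotopic (k : nat) (L : 'I_k -> nat) : seq nat -> seq nat -> Prop :=
  clos_refl_sym_trans (seq nat) (@elem_move k L).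

(* Let u and v be distinct vertices of a maximal simplex Delta(x; s).  Walking
   around the cyclic order of Delta(x; s) from u to v uses consecutive steps
   l_s(a), ..., l_s(b-1) of pairwise distinct types; their sum D lies strictly
   between 0 and n and is congruent to v - u, so by genericity the types form
   exactly the L-type of (u, v).  All vertices of the walk lie in Delta(x; s),
   so triangle moves contract the walk to the single edge (u, v). *)

From HB Require Import structures.
From mathcomp Require Import all_boot all_order all_fingroup zify.
From Stdlib Require Import Relation_Operators.
Set Implicit Arguments. Unset Strict Implicit. Unset Printing Implicit Defensive.

Lemma eq_modn_window K a i j :
  a <= i < a + K -> a <= j < a + K -> i = j %[mod K] -> i = j.
Proof.
wlog le_ij : i j / i <= j => [W Hi Hj E|Hi Hj E].
  by case: (leqP i j) => [|/ltnW] le; [apply: W | symmetry; apply: W].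
have dvd_Kji : K %| j - i by rewrite -eqn_mod_dvd // E.
have [|/dvdn_leq/(_ dvd_Kji)] := posnP (j - i); lia.
Qed.

Lemma uniq_map_iota_mod (T : eqType) K (f : nat -> T) a m : m <= K ->
  (forall i j, f i = f j -> i = j %[mod K]) -> uniq (map f (iota a m)).
Proof.
move=> le_mK f_inj; rewrite map_inj_in_uniq ?iota_uniq // => i j.
rewrite !mem_iota => Hi Hj /f_inj; apply: (eq_modn_window (a := a)); lia.
Qed.

Lemma modn_subDr n u D : u < n -> D < n -> ((u + D) %% n + n - u) %% n = D.
Proof.
move=> lt_un lt_Dn; have [lt_uDn|le_nuD] := ltnP (u + D) n.
  rewrite (modn_small lt_uDn) (_ : u + D + n - u = D + n); last lia.
  by rewrite modnDr modn_small.
rewrite -(subnK le_nuD) modnDr (@modn_small (u + D - n)); last lia.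
by rewrite (_ : u + D - n + n - u = D) ?modn_small //; lia.
Qed.

Section MaximalSimplex.
Variables (k : nat) (L : 'I_k -> nat) (x : 'I_(tn L)) (s : {perm 'I_k}).
Local Notation vertex := (in_maxsimp L x s).

Lemma in_maxsimp_lt a : vertex a -> a < tn L.
Proof.
by case/existsP=> j /eqP ->; rewrite ltn_mod (leq_ltn_trans _ (ltn_ord x)).
Qed.

Lemma in_maxsimp_simplex S : all vertex S -> is_simplex L S.
Proof. by move=> S_in; apply/existsP; exists x; apply/existsP; exists s. Qed.

Lemma in_maxsimp_edge a b : vertex a -> vertex b -> a != b -> is_edge L a b.
Proof.
move=> a_in b_in neq_ab; rewrite /is_edge !in_maxsimp_lt // neq_ab.
by rewrite in_maxsimp_simplex //= a_in b_in.
Qed.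

Lemma in_maxsimp_path a ws :
  uniq (a :: ws) -> all vertex (a :: ws) -> path (is_edge L) a ws.
Proof.
elim: ws a => [//|b ws IHws] a /= /andP [a_notin b_ws_uniq].
case/and3P=> a_in b_in ws_in; rewrite IHws /= ?b_in ?andbT //.
by apply: in_maxsimp_edge => //; apply: contraNneq a_notin => ->; apply: mem_head.
Qed.

(* Each triangle move inserts the next vertex b of the walk into the chord (a, v):
   a, b and v lie in one maximal simplex. *)
Lemma homotopic_chord_rcons q a ws v :
  uniq (a :: rcons ws v) -> all vertex (a :: rcons ws v) ->
  homotopic L (q ++ [:: a; v]) (q ++ a :: rcons ws v).
Proof.
elim: ws q a => [|b ws IHws] q a; first by move=> *; apply: rst_refl.
rewrite rcons_cons => uniq_abwsv all_abwsv.
have [a_notin /andP [b_notin _]] := andP uniq_abwsv.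
have /and3P [a_in b_in _] := all_abwsv.
have v_in : vertex v by apply: (allP all_abwsv); rewrite !inE mem_rcons mem_head !orbT.
have neq_av : a != v.
  by apply: contraNneq a_notin => ->; rewrite inE mem_rcons mem_head orbT.
have neq_ab : a != b by apply: contraNneq a_notin => ->; apply: mem_head.
have neq_bv : b != v by apply: contraNneq b_notin => ->; rewrite mem_rcons mem_head.
apply: (rst_trans _ _ _ (q ++ [:: a; b; v])).
  apply: rst_step; apply: (em_tri q [::]); try exact: in_maxsimp_edge.
  by rewrite in_maxsimp_simplex //= a_in b_in v_in.
have := IHws (q ++ [:: a]) b; rewrite -!catA; apply.
  by case/andP: uniq_abwsv.
by case/andP: all_abwsv.
Qed.

Lemma homotopic_chord a ws : ws != [::] ->
  uniq (a :: ws) -> all vertex (a :: ws) -> homotopic L [:: a; last a ws] (a :: ws).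
Proof.
case/lastP: ws => [//|ws v] _; rewrite last_rcons.
exact: (homotopic_chord_rcons [::]).
Qed.

End MaximalSimplex.

Section CyclicWalk.
Variables (k : nat) (L : 'I_k.+1 -> nat) (s : {perm 'I_k.+1}).
Hypothesis L_gt0 : forall i, 0 < L i.

(* The i-th vertex of Delta(x; s), read cyclically with i taken mod k + 1, is
   [cyc_vertex x i]; consecutive cyclic vertices differ by [L (cyc_type i)]. *)
Definition cyc_type (i : nat) : 'I_k.+1 := s (inord (i %% k.+1)).
Definition cyc_sum (j : nat) : nat := \sum_(i < j) L (cyc_type i).
Definition cyc_vertex (x j : nat) : nat := (x + cyc_sum j) %% tn L.
Local Notation cyc_walk x a m := (awalk L (cyc_vertex x a) (map cyc_type (iota a m))).

Lemma cyc_sumE j : j <= k.+1 -> cyc_sum j = \sum_(i < k.+1 | i < j) L (s i).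
Proof.
move=> le_jk; rewrite /cyc_sum (big_ord_widen _ (fun i => L (cyc_type i)) le_jk).
by apply: eq_bigr => i _; rewrite /cyc_type modn_small // inord_val.
Qed.

Lemma cyc_sum_full : cyc_sum k.+1 = tn L.
Proof.
rewrite cyc_sumE // /tn [in RHS](reindex_inj (@perm_inj _ s)).
by apply: eq_bigl => i; rewrite ltn_ord.
Qed.

Lemma cyc_sumS j : cyc_sum j.+1 = cyc_sum j + L (cyc_type j).
Proof. by rewrite /cyc_sum big_ord_recr. Qed.

Lemma cyc_sum_period j : cyc_sum (k.+1 + j) = tn L + cyc_sum j.
Proof.
rewrite /cyc_sum big_split_ord -cyc_sum_full; congr (_ + _).
by apply: eq_bigr => i _; rewrite /cyc_type modnDl.
Qed.

Lemma cyc_sum_periodM q j : cyc_sum (q * k.+1 + j) = q * tn L + cyc_sum j.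
Proof. by elim: q => [//|q IHq]; rewrite mulSn -addnA cyc_sum_period IHq addnA. Qed.

Lemma cyc_sum_iota a m :
  cyc_sum (a + m) = cyc_sum a + \sum_(i <- map cyc_type (iota a m)) L i.
Proof.
rewrite big_map; elim: m => [|m IHm]; first by rewrite addn0 big_nil addn0.
by rewrite addnS cyc_sumS IHm -addn1 iotaD big_cat big_seq1 addnA.
Qed.

Lemma cyc_sum_lt : {homo cyc_sum : i j / i < j}.
Proof. by apply: homo_ltn ltn_trans _ => j; rewrite cyc_sumS -addn1 leq_add2l. Qed.

Lemma cyc_sum_small j : j < k.+1 -> cyc_sum j < tn L.
Proof. by rewrite -cyc_sum_full; apply: cyc_sum_lt. Qed.

Lemma cyc_type_inj_mod i j : cyc_type i = cyc_type j -> i = j %[mod k.+1].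
Proof. by move/perm_inj/(congr1 val); rewrite /= !inordK ?ltn_mod. Qed.

Lemma cyc_vertex_modn x j : cyc_vertex x j = cyc_vertex x (j %% k.+1).
Proof. by rewrite /cyc_vertex {1}(divn_eq j k.+1) cyc_sum_periodM addnCA modnMDl. Qed.

Lemma cyc_vertex_inj_mod x i j : cyc_vertex x i = cyc_vertex x j -> i = j %[mod k.+1].
Proof.
rewrite [LHS]cyc_vertex_modn [RHS]cyc_vertex_modn => /eqP.
rewrite eqn_modDl !(@modn_small (cyc_sum _)) ?cyc_sum_small ?ltn_mod // => /eqP.
by apply: incn_inj; apply: leq_mono cyc_sum_lt.
Qed.

Lemma cyc_vertex_in (x : 'I_(tn L)) j : in_maxsimp L x s (cyc_vertex x j).
Proof.
apply/existsP; exists (Ordinal (ltn_pmod j (ltn0Sn k))).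
by rewrite cyc_vertex_modn /cyc_vertex cyc_sumE // ltnW // ltn_mod.
Qed.

Lemma awalk_cyc x j m : cyc_walk x j m = map (cyc_vertex x) (iota j.+1 m).
Proof.
elim: m j => [//|m IHm] j /=.
have step : (cyc_vertex x j + L (cyc_type j)) %% tn L = cyc_vertex x j.+1.
  by rewrite /cyc_vertex modnDml cyc_sumS addnA.
by rewrite step IHm.
Qed.

Lemma in_maxsimp_cyc (x : 'I_(tn L)) u :
  in_maxsimp L x s u -> exists2 a, a < k.+1 & u = cyc_vertex x a.
Proof.
by case/existsP=> j /eqP ->; exists j; rewrite // /cyc_vertex cyc_sumE // ltnW.
Qed.

Lemma in_maxsimp_arc (x : 'I_(tn L)) u v :
  in_maxsimp L x s u -> in_maxsimp L x s v -> u != v ->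
  exists a m, [/\ 0 < m, m <= k, u = cyc_vertex x a & v = cyc_vertex x (a + m)].
Proof.
move=> /in_maxsimp_cyc [a lt_ak ->] /in_maxsimp_cyc [b lt_bk ->] neq_ab.
have {}neq_ab : a != b by apply: contraNneq neq_ab => ->.
exists a; case: (ltnP a b) => [lt_ab|le_ba].
  by exists (b - a); rewrite subnKC ?(ltnW lt_ab) //; split=> //; lia.
exists (b + k.+1 - a); rewrite subnKC; last lia.
split=> //; try lia.
by rewrite [in RHS]cyc_vertex_modn modnDr (modn_small lt_bk).
Qed.

Lemma cyc_types_uniq a m : m <= k.+1 -> uniq (map cyc_type (iota a m)).
Proof. by move=> le_mk; apply: uniq_map_iota_mod le_mk cyc_type_inj_mod. Qed.

Lemma cyc_walkE x a m :
  cyc_vertex x a :: cyc_walk x a m = map (cyc_vertex x) (iota a m.+1).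
Proof. by rewrite awalk_cyc. Qed.

Lemma cyc_walk_uniq x a m : m <= k -> uniq (cyc_vertex x a :: cyc_walk x a m).
Proof.
move=> le_mk; rewrite cyc_walkE.
by apply: (@uniq_map_iota_mod _ k.+1) => // i j /cyc_vertex_inj_mod.
Qed.

Lemma cyc_walk_in (x : 'I_(tn L)) a m :
  all (in_maxsimp L x s) (cyc_vertex x a :: cyc_walk x a m).
Proof. by rewrite cyc_walkE; apply/allP=> w /mapP [i _ ->]; apply: cyc_vertex_in. Qed.

Lemma last_cyc_walk x a m :
  last (cyc_vertex x a) (cyc_walk x a m) = cyc_vertex x (a + m).
Proof.
by rewrite awalk_cyc last_map (last_nth a) size_iota -/(iota a m.+1) nth_iota.
Qed.

Lemma cyc_arc_sum x a m : 0 < m -> m <= k ->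
  let D := \sum_(i <- map cyc_type (iota a m)) L i in
  0 < D < tn L /\ (cyc_vertex x (a + m) + tn L - cyc_vertex x a) %% tn L = D.
Proof.
move=> m_gt0 le_mk D.
have D_def : cyc_sum (a + m) = cyc_sum a + D by apply: cyc_sum_iota.
have D_bnd : 0 < D < tn L.
  have lt_a_am : a < a + m by lia.
  have lt_am_ka : a + m < k.+1 + a by lia.
  move: (cyc_sum_lt lt_a_am) (cyc_sum_lt lt_am_ka); rewrite cyc_sum_period D_def.
  clearbody D; lia.
have /andP [D_gt0 D_lt] := D_bnd.
split=> //; rewrite /cyc_vertex D_def addnA -(modnDml (x + cyc_sum a)).
by rewrite modn_subDr // ltn_pmod // (ltn_trans D_gt0 D_lt).
Qed.

End CyclicWalk.

Lemma Ltype_of_sum k (L : 'I_k -> nat) u v I (Y : seq 'I_k) :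
  generic L -> Ltype L u v I -> uniq Y ->
  let D := \sum_(i <- Y) L i in
  0 < D < tn L -> (v + tn L - u) %% tn L = D -> [set i in Y] = I.
Proof.
move=> genL [_ typeI] Y_uniq D /andP [D_gt0 D_lt] vu_eq.
have le_In : \sum_(i in I) L i <= tn L by rewrite /tn [leqRHS](bigID (mem I)) leq_addr.
have sumY : \sum_(i in [set i in Y]) L i = D.
  by rewrite /D (big_uniq _ Y_uniq); apply: eq_bigl => i; rewrite inE.
apply: genL; rewrite sumY.
move: typeI; rewrite vu_eq; case: ltngtP le_In => // [lt_In _|-> _].
  by rewrite modn_small.
by rewrite modnn => D_eq0; rewrite D_eq0 in D_gt0.
Qed.

Theorem lemma2p7 (k : nat) (L : 'I_k -> nat) (u v : nat) (I : {set 'I_k}) :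
  2 <= k -> (forall i, 0 < L i) -> generic L ->
  is_edge L u v -> Ltype L u v I ->
  exists Y : seq 'I_k,
    [/\ size Y = #|I|, uniq Y & [set i in Y] = I] /\
    [/\ path (is_edge L) u (awalk L u Y),
        last u (awalk L u Y) = v
      & homotopic L [:: u; v] (u :: awalk L u Y)].
Proof.
case: k L I => [//|k] L I _ L_gt0 genL /and4P [_ _ neq_uv].
case/existsP=> x /existsP [s]; rewrite /= andbT => /andP [u_in v_in] typeI.
have [a [m [m_gt0 le_mk u_def v_def]]] := in_maxsimp_arc u_in v_in neq_uv.
subst u v.
have [D_bnd arc_type] := cyc_arc_sum s L_gt0 x a m_gt0 le_mk.
have types_uniq := cyc_types_uniq s a (leqW le_mk).
have walk_uniq := cyc_walk_uniq s L_gt0 x a le_mk.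
have walk_in := cyc_walk_in s x a m.
exists (map (cyc_type s) (iota a m)); split.
  have typeY := Ltype_of_sum genL typeI types_uniq D_bnd arc_type.
  by split=> //; rewrite -typeY cardsE; apply/esym/card_uniqP.
rewrite -last_cyc_walk; split; [exact: in_maxsimp_path walk_uniq walk_in | by [] |].
apply: homotopic_chord walk_uniq walk_in.
by rewrite awalk_cyc; case: (m) m_gt0.
Qed.
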